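(* Let $f:\mathbb{R}^d\to\mathbb{R}$ be differentiable with a stochastic gradient oracle $\nabla f(x,\xi)$, and let $(x_t,z_t)_{t\ge0}$ be the continuized Nesterov process (see context) with constant parameters $\eta,\eta',\gamma,\gamma'$ satisfying $\eta+\eta'>0$. Define $\tilde y_k=x_{T_{k+1}^-}$, $\tilde x_k=x_{T_k}$, $\tilde z_k=z_{T_k}$ for $k\ge0$. Then for every $k\ge0$, with $\Delta_k=T_{k+1}-T_k$, $$\tilde y_k=(\tilde z_k-\tilde x_k)\frac{\eta}{\eta+\eta'}\big(1-e^{-(\eta+\eta')\Delta_k}\big)+\tilde x_k,\qquad \tilde x_{k+1}=\tilde y_k-\gamma\nabla f(\tilde y_k,\xi_{k+1}),$$ $$\tilde z_{k+1}=\tilde z_k+\eta'\frac{1-e^{-(\eta+\eta')\Delta_k}}{\eta'+\eta e^{-(\eta+\eta')\Delta_k}}(\tilde y_k-\tilde z_k)-\gamma'\nabla f(\tilde y_k,\xi_{k+1}).$$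
   Context: $(\Xi,\mathcal{P})$ is a probability space and $\nabla f(x,\xi)$ is measurable. Continuized Nesterov process: let $T_0=0$, $T_{k+1}-T_k$ ($k\ge0$) i.i.d. exponential with parameter $1$, and $\xi_1,\xi_2,\dots$ i.i.d. with law $\mathcal{P}$, independent of the $T_k$; $N=\sum_{k\ge1}\delta_{(T_k,\xi_k)}$. The càdlàg process $(x_t,z_t)$ starts at $x_0=z_0$ deterministic and solves $dx_t=\eta(z_t-x_t)dt-\gamma\int_\Xi\nabla f(x_{t^-},\xi)\,dN(t,\xi)$, $dz_t=\eta'(x_t-z_t)dt-\gamma'\int_\Xi\nabla f(x_{t^-},\xi)\,dN(t,\xi)$; i.e. between jump times $\dot x=\eta(z-x)$, $\dot z=\eta'(x-z)$, and at each $T_k$ ($k\ge1$) $x_{T_k}=x_{T_k^-}-\gamma\nabla f(x_{T_k^-},\xi_k)$, $z_{T_k}=z_{T_k^-}-\gamma'\nabla f(x_{T_k^-},\xi_k)$. Here $x_{T^-}$ denotes the left limit of $x$ at $T$. *)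

From HB Require Import structures.
From mathcomp Require Import all_boot all_order all_algebra.
From mathcomp Require Import all_classical all_reals all_analysis.
Set Implicit Arguments. Unset Strict Implicit. Unset Printing Implicit Defensive.
Import Order.TTheory GRing.Theory Num.Theory.
Import numFieldNormedType.Exports.
Local Open Scope classical_set_scope.
Local Open Scope ring_scope.

Definition left_lim {R : realType} {V : normedModType R} (f : R -> V) (t : R) : V :=
  lim (f @ t^'-).

Definition cadlag {R : realType} {V : normedModType R} (f : R -> V) : Prop :=
  (forall t : R, 0 <= t -> f @ t^'+ --> f t) /\
  (forall t : R, 0 < t -> cvg (f @ t^'-)).

(* Pathwise definition of the continuized Nesterov process driven by the
   marked point process N = sum_{k>=1} delta_{(T k, xi k)}:
   T 0 = 0, jump times strictly increasing, x_0 = z_0 = x0,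
   between jumps  x' = eta (z - x),  z' = eta' (x - z),
   at each T (k+1):  x jumps by -gamma grad f(x_{T^-}, xi (k+1)),
                     z jumps by -gamma' grad f(x_{T^-}, xi (k+1)). *)
Definition continuized_nesterov {R : realType} {d : nat} {Xi : Type}
  (gradf : 'rV[R]_d -> Xi -> 'rV[R]_d) (eta eta' gamma gamma' : R)
  (x0 : 'rV[R]_d) (T : nat -> R) (xi : nat -> Xi)
  (x z : R -> 'rV[R]_d) : Prop :=
  [/\ x 0 = x0 /\ z 0 = x0, cadlag x /\ cadlag z,
   (forall k t, T k < t < T k.+1 ->
      is_derive t 1 x (eta *: (z t - x t)) /\
      is_derive t 1 z (eta' *: (x t - z t))),
   (forall k, x (T k.+1) =
      left_lim x (T k.+1) - gamma *: gradf (left_lim x (T k.+1)) (xi k.+1)) &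
   (forall k, z (T k.+1) =
      left_lim z (T k.+1) - gamma' *: gradf (left_lim x (T k.+1)) (xi k.+1))].

From HB Require Import structures.
From mathcomp Require Import all_boot all_order all_algebra.
From mathcomp Require Import all_classical all_reals all_analysis.
From mathcomp Require Import ring.
Set Implicit Arguments. Unset Strict Implicit. Unset Printing Implicit Defensive.
Import Order.TTheory GRing.Theory Num.Theory.
Import numFieldNormedType.Exports.
Local Open Scope classical_set_scope.
Local Open Scope ring_scope.

(* Between two jumps the flow is linear: [eta' x + eta z] is conserved and
   [x - z] decays like [exp (-(eta + eta') t)].  Solving explicitly on
   [(T k, T (k+1))] from the right limits at [T k] and letting [t] tend to
   [T (k+1)] gives [ty]; the jump rule gives [x (T (k+1))]; and the [z]-update
   is the same closed form once [tx - tz] is expressed through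
   [ty - tz = (eta' + eta e) / (eta + eta') (tx - tz)]. *)

Section real_paths.
Variable R : realType.

Lemma is_derive0_cst_itv (f : R -> R) (a b : R) :
  (forall t, a < t < b -> is_derive t 1 f 0) -> f @ a^'+ --> f a ->
  forall t, a < t < b -> f t = f a.
Proof.
move=> f'0 fa t /andP[a_t t_b].
have cst_left s : a < s <= t -> f s = f t.
  move=> /andP[a_s]; rewrite le_eqVlt => /predU1P[-> //|st].
  have sub_ab y : s <= y <= t -> a < y < b.
    by move=> /andP[sy yt]; rewrite (lt_le_trans a_s sy) (le_lt_trans yt t_b).
  have [|| y _] := @MVT_segment R f (fun=> 0) s t (ltW st).
  - by move=> y /[!in_itv]/= /andP[sy yt]; apply: f'0; apply: sub_ab; rewrite !ltW.
  - apply: (@derivable_within_continuous _ _ _ `[s, t]) => y /[!in_itv]/= ys.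
    by case: (f'0 y (sub_ab y ys)).
  by rewrite mul0r => /eqP; rewrite subr_eq0 => /eqP.
have ft : f @ a^'+ --> f t.
  apply: cvg_near_cst; near=> s; apply: cst_left; apply/andP; split.
    by near: s; exact: nbhs_right_gt.
  by apply/ltW; near: s; exact: nbhs_right_lt.
exact/esym/(cvg_unique _ fa ft).
Unshelve. all: by end_near.
Qed.

Lemma is_derive_expR_mul (c t : R) :
  is_derive t 1 (fun s => expR (c * s)) (c * expR (c * t)).
Proof.
rewrite mulrC; apply: (is_derive1_comp (f := expR) (g := fun s => c * s)).
apply: is_derive_eq (is_deriveZ c (is_derive_id t (1 : R))) _.
by rewrite /GRing.scale/= mulr1.
Qed.

Lemma linear_ode_sol (f : R -> R) (c a b : R) :
  (forall t, a < t < b -> is_derive t 1 f (c * f t)) -> f @ a^'+ --> f a ->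
  forall t, a < t < b -> f t = expR (c * (t - a)) * f a.
Proof.
move=> f'cf fa t tab.
pose g s := expR (- c * s) * f s.
have g'0 s : a < s < b -> is_derive s 1 g 0.
  move=> sab.
  apply: is_derive_eq (is_deriveM (is_derive_expR_mul (- c) s) (f'cf s sab)) _.
  by rewrite /GRing.scale/=; ring.
have ga : g @ a^'+ --> g a.
  apply: cvgM => //; apply: cvg_at_right_filter.
  have [/derivable1_diffP/differentiable_continuous //] := is_derive_expR_mul (- c) a.
have := is_derive0_cst_itv g'0 ga tab; rewrite /g => gtga.
apply: (@mulfI _ (expR (- c * t))); first by rewrite gt_eqF ?expR_gt0.
by rewrite gtga mulrA -expRD; congr (expR _ * _); ring.
Qed.

Lemma is_derive_mx_entry (V : normedModType R) m n (M : V -> 'M[R]_(m, n))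
    (t v : V) (dM : 'M[R]_(m, n)) i j :
  is_derive t v M dM -> is_derive t v (fun s => M s i j) (dM i j).
Proof.
case=> M't <-; rewrite (derive_mx M't) mxE.
exact/derivableP/(derivable_mxP M t v).1.
Qed.

Lemma linear_ode_sol_mx m n (M : R -> 'M[R]_(m, n)) (c a b : R) :
  (forall t, a < t < b -> is_derive t 1 M (c *: M t)) -> M @ a^'+ --> M a ->
  forall t, a < t < b -> M t = expR (c * (t - a)) *: M a.
Proof.
move=> M'cM Ma t tab; apply/matrixP => i j; rewrite mxE.
have Mij : (fun s => M s i j) @ a^'+ --> M a i j.
  exact: (cvg_comp _ _ Ma (@coord_continuous R m n i j (M a))).
apply: (linear_ode_sol _ Mij tab) => s sab.
by have := is_derive_mx_entry i j (M'cM s sab); rewrite mxE.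
Qed.

Lemma left_lim_eq_continuous (V : normedModType R) (f g : R -> V) (a b : R) :
  a < b -> (forall t, a < t < b -> f t = g t) -> {for b, continuous g} ->
  left_lim f b = g b.
Proof.
move=> ab fg gb; apply: cvg_lim => //.
apply: cvg_trans (cvg_at_left_filter gb); apply: near_eq_cvg.
near=> t; apply/esym/fg; apply/andP; split.
  by near: t; exact: nbhs_left_gt.
by near: t; exact: nbhs_left_lt.
Unshelve. all: by end_near.
Qed.

Lemma continuous_relaxation (V : normedModType R) (p w : V) (k c a : R) :
  continuous (fun t => p + (k * (1 - expR (c * (t - a)))) *: w).
Proof.
move=> t; apply: cvgD; first exact: cvg_cst.
apply: cvgZ; last exact: cvg_cst.
apply: cvgM; first exact: cvg_cst.
apply: cvgB; first exact: cvg_cst.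
apply: continuous_comp; last exact: continuous_expR.
by apply: cvgM; [exact: cvg_cst|apply: cvgB; [exact: cvg_id|exact: cvg_cst]].
Qed.

End real_paths.

Section nesterov_flow.
Variables (R : realType) (d : nat) (eta eta' a b : R) (x z : R -> 'rV[R]_d).
Hypothesis flow : forall t, a < t < b ->
  is_derive t 1 x (eta *: (z t - x t)) /\ is_derive t 1 z (eta' *: (x t - z t)).
Hypotheses (x_right : x @ a^'+ --> x a) (z_right : z @ a^'+ --> z a).

Lemma nesterov_flow_conserved t : a < t < b ->
  eta' *: x t + eta *: z t = eta' *: x a + eta *: z a.
Proof.
move=> tab; pose M s := eta' *: x s + eta *: z s.
rewrite [LHS](linear_ode_sol_mx (M := M) (c := 0) _ _ tab) //.
- by rewrite (mul0r (t - a)) expR0 scale1r.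
- move=> s sab; have [x' z'] := flow sab.
  apply: is_derive_eq (is_deriveD (is_deriveZ eta' x') (is_deriveZ eta z')) _.
  by apply/matrixP => i j; rewrite !mxE; ring.
- by apply: cvgD; apply: cvgZ => //; exact: cvg_cst.
Qed.

Lemma nesterov_flow_gap t : a < t < b ->
  x t - z t = expR (- (eta + eta') * (t - a)) *: (x a - z a).
Proof.
move=> tab; pose M s := x s - z s.
rewrite [LHS](linear_ode_sol_mx (M := M) (c := - (eta + eta')) _ _ tab) //.
- move=> s sab; have [x' z'] := flow sab.
  apply: is_derive_eq (is_deriveB x' z') _.
  by apply/matrixP => i j; rewrite !mxE; ring.
- exact: cvgB.
Qed.

Hypothesis eta_eta'_neq0 : eta + eta' != 0.

Let relax (k t : R) := k / (eta + eta') * (1 - expR (- (eta + eta') * (t - a))).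

Lemma nesterov_flow_x t : a < t < b -> x t = x a + relax eta t *: (z a - x a).
Proof.
move=> tab.
have -> : x t = (eta + eta')^-1 *: ((eta' *: x t + eta *: z t) + eta *: (x t - z t)).
  by apply/matrixP => i j; rewrite !mxE; field.
rewrite nesterov_flow_conserved // nesterov_flow_gap //.
by apply/matrixP => i j; rewrite !mxE /relax; field.
Qed.

Lemma nesterov_flow_z t : a < t < b -> z t = z a + relax eta' t *: (x a - z a).
Proof.
move=> tab.
have -> : z t = (eta + eta')^-1 *: ((eta' *: x t + eta *: z t) - eta' *: (x t - z t)).
  by apply/matrixP => i j; rewrite !mxE; field.
rewrite nesterov_flow_conserved // nesterov_flow_gap //.
by apply/matrixP => i j; rewrite !mxE /relax; field.
Qed.

Hypothesis ab : a < b.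

Lemma left_lim_nesterov_flow_x : left_lim x b = x a + relax eta b *: (z a - x a).
Proof. exact/(left_lim_eq_continuous ab nesterov_flow_x)/continuous_relaxation. Qed.

Lemma left_lim_nesterov_flow_z : left_lim z b = z a + relax eta' b *: (x a - z a).
Proof. exact/(left_lim_eq_continuous ab nesterov_flow_z)/continuous_relaxation. Qed.

End nesterov_flow.

Theorem proposition2 (R : realType) (d : nat) (Xi : Type)
  (f : 'rV[R]_d -> R) (gradf : 'rV[R]_d -> Xi -> 'rV[R]_d)
  (eta eta' gamma gamma' : R) (x0 : 'rV[R]_d)
  (T : nat -> R) (xi : nat -> Xi) (x z : R -> 'rV[R]_d) :
  (forall p : 'rV[R]_d, differentiable f p) ->
  0 < eta + eta' ->
  T 0 = 0 ->
  (forall k, T k < T k.+1) ->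
  continuized_nesterov gradf eta eta' gamma gamma' x0 T xi x z ->
  forall k : nat,
    let Delta := T k.+1 - T k in
    let e := expR (- (eta + eta') * Delta) in
    let ty := left_lim x (T k.+1) in
    let tx := x (T k) in
    let tz := z (T k) in
    [/\ ty = (eta / (eta + eta') * (1 - e)) *: (tz - tx) + tx,
        x (T k.+1) = ty - gamma *: gradf ty (xi k.+1) &
        (eta' + eta * e != 0 ->
         z (T k.+1) = tz + (eta' * (1 - e) / (eta' + eta * e)) *: (ty - tz)
                         - gamma' *: gradf ty (xi k.+1))].
Proof.
move=> _ L_gt0 T0 T_lt [_ [[x_cadlag _] [z_cadlag _]] flow x_jump z_jump] k.
have T_ge0 n : 0 <= T n by elim: n => [|n IHn]; rewrite ?T0 // (le_trans IHn) ?ltW.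
have L_neq0 : eta + eta' != 0 by rewrite gt_eqF.
have x_right := x_cadlag _ (T_ge0 k); have z_right := z_cadlag _ (T_ge0 k).
have ty_eq := left_lim_nesterov_flow_x (flow k) x_right z_right L_neq0 (T_lt k).
have tz_eq := left_lim_nesterov_flow_z (flow k) x_right z_right L_neq0 (T_lt k).
move=> Delta e ty tx tz; rewrite /ty /e /Delta; split.
- by rewrite ty_eq addrC.
- exact: x_jump.
- move=> e_neq0; rewrite z_jump tz_eq ty_eq; apply/matrixP => i j; rewrite !mxE.
  by field; rewrite L_neq0 e_neq0.
Qed.
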